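(* Assume the Continuum Hypothesis. Then there is no Bernstein set $B\subseteq\mathbb R$ which is an $\omega_1$-covering.
   Context: A set $B\subseteq\mathbb R$ is a Bernstein set if for every uncountable Borel set $Z\subseteq\mathbb R$ both $Z\cap B$ and $Z\setminus B$ are nonempty. A set $A\subseteq\mathbb R$ is an $\omega_1$-covering if for every $C\subseteq\mathbb R$ with $|C|=\omega_1$ there is $x\in\mathbb R$ with $C+x\subseteq A$. *)

From mathcomp Require Import all_boot all_order all_algebra.
From mathcomp Require Import all_classical all_reals all_analysis.
Set Implicit Arguments. Unset Strict Implicit. Unset Printing Implicit Defensive.
Import Order.TTheory GRing.Theory Num.Theory.
Import numFieldTopology.Exports numFieldNormedType.Exports.
Local Open Scope classical_set_scope.
Local Open Scope ring_scope.

Definition borel_set (R : realType) (Z : set R) : Prop :=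
  <<s [set U : set R | open U] >> Z.

Definition card_omega1 (T : Type) (C : set T) : Prop :=
  ~ countable C /\
  exists lt : T -> T -> Prop,
    (forall x, C x -> ~ lt x x) /\
    (forall x y z, C x -> C y -> C z -> lt x y -> lt y z -> lt x z) /\
    (forall x y, C x -> C y -> x <> y -> lt x y \/ lt y x) /\
    (forall A, A `<=` C -> A !=set0 -> exists2 m, A m & forall a, A a -> ~ lt a m) /\
    (forall x, C x -> countable [set y | C y /\ lt y x]).

Definition CH (R : realType) : Prop := card_omega1 [set: R].

Definition bernstein_set (R : realType) (B : set R) : Prop :=
  forall Z : set R, borel_set Z -> ~ countable Z ->
    (Z `&` B !=set0) /\ (Z `\` B !=set0).

Definition omega1_covering (R : realType) (A : set R) : Prop :=
  forall C : set R, card_omega1 C ->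
    exists x : R, [set c + x | c in C] `<=` A.

From mathcomp Require Import all_boot all_order all_algebra.
From mathcomp Require Import all_classical all_reals all_analysis.
Import numFieldTopology.Exports numFieldNormedType.Exports.
Local Open Scope classical_set_scope.
Local Open Scope ring_scope.

(* Under CH the real line itself has cardinality omega_1, so an
   omega_1-covering set contains a translate of R, i.e. is all of R; but a
   Bernstein set misses a point of every uncountable Borel set, R included. *)

Lemma borel_setT (R : realType) : borel_set [set: R].
Proof. exact: sub_sigma_algebra openT. Qed.

Lemma omega1_covering_setT {R : realType} (A : set R) :
  card_omega1 [set: R] -> omega1_covering A -> A = setT.
Proof.
move=> omega1R /(_ _ omega1R) [x RxA]; apply/seteqP; split=> // y _.
by apply: RxA; exists (y - x) => //; rewrite GRing.subrK.
Qed.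

Lemma bernstein_set_neqT {R : realType} (B : set R) :
  ~ countable [set: R] -> bernstein_set B -> B <> setT.
Proof.
move=> uncountR /(_ _ (borel_setT R) uncountR) [_ [y [_ By]]].
by move=> BT; apply: By; rewrite BT.
Qed.

Theorem mainTheorem7 (R : realType) :
  CH R -> ~ exists B : set R, bernstein_set B /\ omega1_covering B.
Proof.
move=> omega1R [B [bernB covB]].
apply: (bernstein_set_neqT _ omega1R.1 bernB).
exact: (omega1_covering_setT _ omega1R covB).
Qed.
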